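(* There is an absolute constant $C>0$ such that the following holds. Let $\mathcal{T}=\sum_{l=1}^r\sigma^*_lU^*_l\otimes U^*_l\otimes U^*_l+\mathcal{E}$ with the noise $\mathcal{E}$ satisfying $\max_{ijk}|\mathcal{E}_{ijk}|\le\|\mathcal{E}\|_F/n^{1.5}$, and let $\nu_i,Z,p_{ijk},\widehat p_{ijk},\mathcal{W}_{ijk},\delta_{ijk}$ be as in the context. Let $U\in\mathbb{R}^{n\times r}$ be fixed (independent of $\delta$) with unit-norm columns and $|U_{il}|\le2\nu_i$ for all $i,l$, and fix $q\in[r]$ and $\epsilon\in(0,1]$. If $m\ge\frac{C}{\epsilon^2}nZ\log^2(n)$, then with probability at least $1-n^{-10}$, $$\Big\|\sum_{i=1}^n\sum_{j,k}\big(\delta_{ijk}\mathcal{W}_{ijk}-1\big)\mathcal{E}_{ijk}U_{jq}U_{kq}\,e_i\Big\|\le\epsilon\|\mathcal{E}\|_F .$$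
   Context: $U^*\in\mathbb{R}^{n\times r}$ has orthonormal columns, $\sigma^*_l>0$. $\nu_i=\frac{\|\mathcal{T}_{i,:,:}\|_F}{\|\mathcal{T}\|_F}+\frac1{\sqrt n}$ with $\|\mathcal{T}_{i,:,:}\|_F^2=\sum_{j,k}\mathcal{T}_{ijk}^2$; $Z=(\sum_i\nu_i^{3/2})^2$; $p_{ijk}=0.5\frac{\nu_i^{3/2}\nu_j^{3/2}+\nu_j^{3/2}\nu_k^{3/2}+\nu_k^{3/2}\nu_i^{3/2}}{3nZ}+0.5\frac{\mathcal{T}_{ijk}^2}{\|\mathcal{T}\|_F^2}$; $\widehat p_{ijk}=\min\{mp_{ijk},1\}$; $\mathcal{W}_{ijk}=1/\widehat p_{ijk}$; $\delta_{ijk}$ independent Bernoulli$(\widehat p_{ijk})$; $e_i$ the standard basis vectors; $\|\cdot\|_F$ the Frobenius norm. *)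

From Stdlib Require Import Reals Lra List ClassicalEpsilon.
Import ListNotations.
Open Scope R_scope.

(* sumR n f = f 0 + ... + f (n-1)  (indices are 0-based) *)
Fixpoint sumR (n : nat) (f : nat -> R) : R :=
  match n with O => 0 | S n' => sumR n' f + f n' end.

Definition sum3 (n : nat) (F : nat -> nat -> nat -> R) : R :=
  sumR n (fun i => sumR n (fun j => sumR n (fun k => F i j k))).

Definition frob (n : nat) (T : nat -> nat -> nat -> R) : R :=
  sqrt (sum3 n (fun i j k => T i j k ^ 2)).

Definition slice_norm (n : nat) (T : nat -> nat -> nat -> R) (i : nat) : R :=
  sqrt (sumR n (fun j => sumR n (fun k => T i j k ^ 2))).

Definition cp_tensor (r : nat) (sigma : nat -> R) (Us : nat -> nat -> R)
  (E : nat -> nat -> nat -> R) : nat -> nat -> nat -> R :=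
  fun i j k => sumR r (fun l => sigma l * Us i l * Us j l * Us k l) + E i j k.

Definition nu (n : nat) (T : nat -> nat -> nat -> R) (i : nat) : R :=
  slice_norm n T i / frob n T + / sqrt (INR n).

Definition Zc (n : nat) (T : nat -> nat -> nat -> R) : R :=
  (sumR n (fun i => Rpower (nu n T i) (3/2))) ^ 2.

Definition pr (n : nat) (T : nat -> nat -> nat -> R) (i j k : nat) : R :=
  let a := Rpower (nu n T i) (3/2) in
  let b := Rpower (nu n T j) (3/2) in
  let c := Rpower (nu n T k) (3/2) in
  0.5 * ((a * b + b * c + c * a) / (3 * INR n * Zc n T))
  + 0.5 * (T i j k ^ 2 / frob n T ^ 2).

Definition phat (n : nat) (m : R) (T : nat -> nat -> nat -> R) (i j k : nat) : R :=
  Rmin (m * pr n T i j k) 1.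

Definition Wt (n : nat) (m : R) (T : nat -> nat -> nat -> R) (i j k : nat) : R :=
  / phat n m T i j k.

Definition outcome := nat -> nat -> nat -> bool.

Definition b2R (b : bool) : R := if b then 1 else 0.

Definition upd (d : outcome) (i j k : nat) (b : bool) : outcome :=
  fun i' j' k' =>
    if (Nat.eqb i i' && Nat.eqb j j' && Nat.eqb k k')%bool then b else d i' j' k'.

Definition triples (n : nat) : list (nat * nat * nat) :=
  flat_map (fun i => flat_map (fun j => map (fun k => (i, j, k)) (seq 0 n)) (seq 0 n))
    (seq 0 n).

(* Expectation of F when delta_{ijk}, (i,j,k) in ts, are independent
   Bernoulli(p i j k) (entries not in ts are fixed by d). *)
Fixpoint expect (ts : list (nat * nat * nat)) (p : nat -> nat -> nat -> R)
  (d : outcome) (F : outcome -> R) : R :=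
  match ts with
  | [] => F d
  | (i, j, k) :: ts' =>
      p i j k * expect ts' p (upd d i j k true) F
      + (1 - p i j k) * expect ts' p (upd d i j k false) F
  end.

Definition indic (P : Prop) : R :=
  if excluded_middle_informative P then 1 else 0.

Definition prob (n : nat) (p : nat -> nat -> nat -> R) (P : outcome -> Prop) : R :=
  expect (triples n) p (fun _ _ _ => false) (fun d => indic (P d)).

Definition dev_norm (n : nat) (m : R) (T E : nat -> nat -> nat -> R)
  (U : nat -> nat -> R) (q : nat) (d : outcome) : R :=
  sqrt (sumR n (fun i =>
    (sumR n (fun j => sumR n (fun k =>
       (b2R (d i j k) * Wt n m T i j k - 1) * E i j k * U j q * U k q))) ^ 2)).

From Stdlib Require Import Reals Lra Lia List ClassicalEpsilon Classical.
Import ListNotations.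
Open Scope R_scope.

(** Each coordinate of the deviation vector is a sum of independent centred terms
    (δ_ijk / p̂_ijk - 1) a_ijk with a_ijk = E_ijk U_jq U_kq.  Since
    p_ijk >= ν_j^(3/2) ν_k^(3/2) / (6 n Z), the entrywise bound on E and |U_il| <= 2 ν_i give
    |a_ijk| <= 24 ‖E‖_F Z p_ijk and a_ijk^2 <= 192 ‖E‖_F^2 Z p_ijk / n^2: the terms are
    small compared with their sampling probability.  A Bernoulli moment generating function
    estimate and Chernoff's method then show that each coordinate exceeds ε ‖E‖_F / √n with
    probability at most 2 exp(-ε^2 m / (1536 n Z)); if no coordinate does, the norm is at
    most ε ‖E‖_F.  A union bound over the n coordinates gives failure probability
    2 n exp(-ε^2 m / (1536 n Z)) <= n^-10 once m >= 50000 n Z log^2 n / ε^2. *)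

Lemma exp_le_compat x y : x <= y -> exp x <= exp y.
Proof. intros [H|H]; [left; now apply exp_increasing | subst; lra]. Qed.

Lemma Rpower_3_2 x : 0 < x -> Rpower x (3 / 2) = x * sqrt x.
Proof.
  intro H. replace (3 / 2) with (1 + / 2) by field.
  now rewrite Rpower_plus, Rpower_1, Rpower_sqrt.
Qed.

Lemma ln_2_le N : 2 <= N -> ln 2 <= ln N.
Proof.
  intro HN. destruct (Req_dec N 2) as [->|]; [lra|].
  apply Rlt_le, ln_increasing; lra.
Qed.

Lemma Rabs_mult3_le a b c A B C : Rabs a <= A -> Rabs b <= B -> Rabs c <= C ->
  Rabs (a * b * c) <= A * B * C.
Proof.
  intros. rewrite !Rabs_mult.
  pose proof (Rabs_pos a). pose proof (Rabs_pos b). pose proof (Rabs_pos c).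
  apply Rmult_le_compat; try apply Rmult_le_compat; auto; nra.
Qed.

Lemma sumR_ext n f g : (forall i, (i < n)%nat -> f i = g i) -> sumR n f = sumR n g.
Proof. induction n; intro H; simpl; auto. rewrite IHn, H; auto. Qed.

Lemma sumR_le n f g : (forall i, (i < n)%nat -> f i <= g i) -> sumR n f <= sumR n g.
Proof. induction n; intro H; simpl; [lra|]. apply Rplus_le_compat; auto. Qed.

Lemma sumR_const n c : sumR n (fun _ => c) = INR n * c.
Proof. induction n; cbn [sumR]; [simpl; ring|]. rewrite IHn, S_INR; ring. Qed.

Lemma sumR_nonneg n f : (forall i, (i < n)%nat -> 0 <= f i) -> 0 <= sumR n f.
Proof.
  intro H. apply Rle_trans with (sumR n (fun _ => 0)); [rewrite sumR_const; lra|].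
  now apply sumR_le.
Qed.

Lemma sumR_ge_term n f i : (forall i, (i < n)%nat -> 0 <= f i) -> (i < n)%nat ->
  f i <= sumR n f.
Proof.
  induction n; intros H Hi; [lia|]. simpl.
  destruct (Nat.eq_dec i n) as [->|Hne].
  - assert (0 <= sumR n f) by (apply sumR_nonneg; auto). lra.
  - assert (f i <= sumR n f) by (apply IHn; auto; lia).
    specialize (H n (Nat.lt_succ_diag_r n)). lra.
Qed.

Lemma sumR_mult_l n c f : c * sumR n f = sumR n (fun i => c * f i).
Proof. induction n; simpl; [ring|]. rewrite <- IHn; ring. Qed.

Fixpoint prodR (n : nat) (f : nat -> R) : R :=
  match n with O => 1 | S n' => prodR n' f * f n' end.

Lemma prodR_ext n f g : (forall i, (i < n)%nat -> f i = g i) -> prodR n f = prodR n g.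
Proof. induction n; intro H; simpl; auto. rewrite IHn, H; auto. Qed.

Lemma prodR_1 n : prodR n (fun _ => 1) = 1.
Proof. induction n; simpl; [|rewrite IHn]; ring. Qed.

Lemma prodR_single n i Q : (i < n)%nat ->
  prodR n (fun i' => if Nat.eqb i' i then Q else 1) = Q.
Proof.
  induction n; intro H; [lia|]. simpl. destruct (Nat.eqb_spec n i) as [->|Hne].
  - rewrite (prodR_ext i _ (fun _ => 1)), prodR_1; [ring|].
    intros i' Hi'. destruct (Nat.eqb_spec i' i); [lia|auto].
  - rewrite IHn by lia. ring.
Qed.

Lemma exp_sumR n f : exp (sumR n f) = prodR n (fun i => exp (f i)).
Proof. induction n; simpl; [apply exp_0|]. rewrite exp_plus, IHn; auto. Qed.

Lemma prodR_nonneg n f : (forall i, (i < n)%nat -> 0 <= f i) -> 0 <= prodR n f.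
Proof. induction n; intro H; simpl; [lra|]. apply Rmult_le_pos; auto. Qed.

Lemma prodR_le n f g : (forall i, (i < n)%nat -> 0 <= f i <= g i) ->
  prodR n f <= prodR n g.
Proof.
  induction n; intro H; simpl; [lra|].
  apply Rmult_le_compat; [apply prodR_nonneg; intros; apply H; lia
                         | apply H; lia | apply IHn; intros; apply H; lia | apply H; lia].
Qed.

Fixpoint prodL {A} (l : list A) (h : A -> R) : R :=
  match l with [] => 1 | x :: l' => h x * prodL l' h end.

Lemma prodL_ext {A} (l : list A) f g : (forall x, f x = g x) -> prodL l f = prodL l g.
Proof. intro H; induction l; simpl; [|rewrite H, IHl]; auto. Qed.

Lemma prodL_app {A} (l1 l2 : list A) h : prodL (l1 ++ l2) h = prodL l1 h * prodL l2 h.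
Proof. induction l1; simpl; [|rewrite IHl1]; ring. Qed.

Lemma prodL_flat_map {A B} (F : A -> list B) l h :
  prodL (flat_map F l) h = prodL l (fun x => prodL (F x) h).
Proof. induction l; simpl; auto. rewrite prodL_app, IHl; reflexivity. Qed.

Lemma prodL_map {A B} (f : A -> B) l h : prodL (map f l) h = prodL l (fun x => h (f x)).
Proof. induction l; simpl; auto. rewrite IHl; reflexivity. Qed.

Lemma prodL_seq n f : prodL (seq 0 n) f = prodR n f.
Proof. induction n; auto. rewrite seq_S, prodL_app, IHn; simpl; ring. Qed.

Lemma prodL_triples n h : prodL (triples n) h =
  prodR n (fun i => prodR n (fun j => prodR n (fun k => h (i, j, k)))).
Proof.
  unfold triples. rewrite prodL_flat_map, <- prodL_seq. apply prodL_ext; intro i.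
  rewrite prodL_flat_map, <- prodL_seq. apply prodL_ext; intro j.
  now rewrite prodL_map, <- prodL_seq.
Qed.

Lemma prodL_triples_row n i (g : nat -> nat -> R) : (i < n)%nat ->
  prodL (triples n) (fun '(i', j, k) => if Nat.eqb i' i then g j k else 1) =
  prodR n (fun j => prodR n (fun k => g j k)).
Proof.
  intro Hi. rewrite prodL_triples.
  rewrite <- (prodR_single n i (prodR n (fun j => prodR n (fun k => g j k)))) by exact Hi.
  apply prodR_ext; intros i' _. destruct (Nat.eqb i' i); auto.
  rewrite (prodR_ext n _ (fun _ => 1)), prodR_1; auto.
  intros; apply prodR_1.
Qed.

Lemma NoDup_flat_map {A B} (F : A -> list B) l : NoDup l -> (forall x, NoDup (F x)) ->
  (forall x y z, In z (F x) -> In z (F y) -> x = y) -> NoDup (flat_map F l).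
Proof.
  intros Hl HF Hd; induction l as [|x l IH]; simpl; [constructor|].
  inversion Hl; subst. apply NoDup_app; auto.
  intros z Hz Hz'. apply in_flat_map in Hz' as [y [Hy Hzy]].
  rewrite (Hd x y z Hz Hzy) in *. contradiction.
Qed.

Lemma NoDup_triples n : NoDup (triples n).
Proof.
  unfold triples. apply NoDup_flat_map; [apply seq_NoDup| |].
  - intro i. apply NoDup_flat_map; [apply seq_NoDup| |].
    + intro j. apply NoDup_map_NoDup_ForallPairs; [|apply seq_NoDup].
      intros a b _ _ H; congruence.
    + intros a b z H1 H2.
      apply in_map_iff in H1 as [? [<- _]]. apply in_map_iff in H2 as [? [H _]]. congruence.
  - intros a b z H1 H2.
    apply in_flat_map in H1 as [? [_ H1]]. apply in_flat_map in H2 as [? [_ H2]].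
    apply in_map_iff in H1 as [? [<- _]]. apply in_map_iff in H2 as [? [H _]]. congruence.
Qed.

(** * Independent Bernoulli sampling *)

Definition uncurry3 {A} (f : nat -> nat -> nat -> A) (t : nat * nat * nat) : A :=
  let '(i, j, k) := t in f i j k.

Definition bernoulli_params (p : nat -> nat -> nat -> R) : Prop :=
  forall i j k, 0 <= p i j k <= 1.

Lemma bernoulli_params_Rmin (q : nat -> nat -> nat -> R) : (forall i j k, 0 <= q i j k) ->
  bernoulli_params (fun i j k => Rmin (q i j k) 1).
Proof. intros Hq i j k. split; [apply Rmin_glb; [apply Hq | lra] | apply Rmin_r]. Qed.

Section Expectation.
Variables (ts : list (nat * nat * nat)) (p : nat -> nat -> nat -> R).

Lemma expect_ext : forall d F G, (forall d, F d = G d) -> expect ts p d F = expect ts p d G.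
Proof.
  induction ts as [|[[i j] k] ts' IH]; intros d F G H; simpl; auto.
  now rewrite (IH _ F G H), (IH _ F G H).
Qed.

Lemma expect_le : bernoulli_params p -> forall d F G, (forall d, F d <= G d) ->
  expect ts p d F <= expect ts p d G.
Proof.
  intro Hp; induction ts as [|[[i j] k] ts' IH]; intros d F G H; simpl; auto.
  destruct (Hp i j k).
  apply Rplus_le_compat; apply Rmult_le_compat_l; try lra; apply IH; auto.
Qed.

Lemma expect_const : forall d c, expect ts p d (fun _ => c) = c.
Proof. induction ts as [|[[i j] k] ts' IH]; intros d c; simpl; auto. rewrite !IH; ring. Qed.

Lemma expect_plus : forall d F G,
  expect ts p d (fun d => F d + G d) = expect ts p d F + expect ts p d G.
Proof. induction ts as [|[[i j] k] ts' IH]; intros d F G; simpl; auto. rewrite !IH; ring. Qed.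

Lemma expect_scal : forall d c F, expect ts p d (fun d => c * F d) = c * expect ts p d F.
Proof. induction ts as [|[[i j] k] ts' IH]; intros d c F; simpl; auto. rewrite !IH; ring. Qed.

Lemma expect_sumR n : forall d (F : nat -> outcome -> R),
  expect ts p d (fun d => sumR n (fun i => F i d)) = sumR n (fun i => expect ts p d (F i)).
Proof.
  induction n as [|n IH]; intros d F; simpl; [apply expect_const|].
  now rewrite expect_plus, IH.
Qed.

End Expectation.

Lemma uncurry3_upd d i j k b t : t <> (i, j, k) -> uncurry3 (upd d i j k b) t = uncurry3 d t.
Proof.
  destruct t as [[a c] e]; simpl; unfold upd; intro H.
  destruct (Nat.eqb_spec i a), (Nat.eqb_spec j c), (Nat.eqb_spec k e); simpl; auto.
  subst; congruence.
Qed.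

Lemma uncurry3_upd_same d i j k b : uncurry3 (upd d i j k b) (i, j, k) = b.
Proof. simpl; unfold upd; now rewrite !Nat.eqb_refl. Qed.

Lemma expect_factor_out ts p t0 g : ~ In t0 ts -> forall d F,
  expect ts p d (fun d' => g (uncurry3 d' t0) * F d') = g (uncurry3 d t0) * expect ts p d F.
Proof.
  induction ts as [|[[i j] k] ts IH]; intros Hn d F; simpl; auto.
  simpl in Hn. rewrite !IH by tauto.
  rewrite !uncurry3_upd by (intro; apply Hn; left; congruence). ring.
Qed.

Lemma expect_prodL_indep ts p (h : nat * nat * nat -> bool -> R) : NoDup ts -> forall d,
  expect ts p d (fun d' => prodL ts (fun t => h t (uncurry3 d' t))) =
  prodL ts (fun t => uncurry3 p t * h t true + (1 - uncurry3 p t) * h t false).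
Proof.
  induction ts as [|[[i j] k] ts IH]; intros Hnd d; simpl; auto.
  inversion Hnd; subst.
  rewrite !(expect_factor_out ts p (i, j, k) (h (i, j, k))) by auto.
  rewrite !uncurry3_upd_same, !IH by auto. ring.
Qed.

Lemma prob_certain n p (P : outcome -> Prop) : (forall d, P d) -> prob n p P = 1.
Proof.
  intro H. unfold prob. rewrite (expect_ext _ _ _ _ (fun _ => 1)); [apply expect_const|].
  intro d. unfold indic.
  destruct excluded_middle_informative as [_|HP]; [reflexivity | exfalso; exact (HP (H d))].
Qed.

Lemma prob_ext n p (P Q : outcome -> Prop) : (forall d, P d <-> Q d) -> prob n p P = prob n p Q.
Proof.
  intro H. unfold prob. apply expect_ext. intro d. unfold indic.
  destruct (excluded_middle_informative (P d)), (excluded_middle_informative (Q d));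
    firstorder.
Qed.

(** * Chernoff bounds for sampled sums *)

Lemma exp_le_quadratic x : Rabs x <= /2 -> exp x <= 1 + x + 2 * x ^ 2.
Proof.
  intro H. pose proof (Rle_abs x). pose proof (Rle_abs (- x)). rewrite Rabs_Ropp in *.
  assert (Hinv : exp x * exp (- x) = 1) by (rewrite <- exp_plus, Rplus_opp_r; apply exp_0).
  pose proof (exp_ineq1_le (- x)). pose proof (exp_pos x).
  assert (1 <= (1 + x + 2 * x ^ 2) * exp (- x)).
  { apply Rle_trans with ((1 + x + 2 * x ^ 2) * (1 - x)); [nra|].
    apply Rmult_le_compat_l; nra. }
  nra.
Qed.

Lemma bernoulli_mgf_le q s : 0 < q -> Rabs s <= q / 2 ->
  Rmin q 1 * exp (s * (/ Rmin q 1 - 1)) + (1 - Rmin q 1) * exp (- s) <= exp (2 * s ^ 2 / q).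
Proof.
  intros Hq Hs. pose proof (exp_ineq1_le (2 * s ^ 2 / q)) as Hexp.
  assert (H2 : 0 <= 2 * s ^ 2 / q) by (apply Rle_mult_inv_pos; nra).
  destruct (Rle_lt_dec 1 q).
  - rewrite Rmin_right by lra. rewrite Rinv_1, Rminus_diag, Rmult_0_r, exp_0. lra.
  - rewrite Rmin_left by lra.
    pose proof (Rle_abs s). pose proof (Rle_abs (- s)). rewrite Rabs_Ropp in *.
    assert (Hw : 1 <= / q) by (rewrite <- Rinv_1; apply Rinv_le_contravar; lra).
    assert (E1 : exp (s * (/ q - 1)) <= 1 + s * (/ q - 1) + 2 * (s * (/ q - 1)) ^ 2).
    { apply exp_le_quadratic. rewrite Rabs_mult, (Rabs_right (/ q - 1)) by lra.
      apply Rle_trans with (q / 2 * (/ q - 1)); [apply Rmult_le_compat_r; lra|].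
      unfold Rdiv. rewrite Rmult_minus_distr_l, Rmult_assoc, (Rmult_comm (/2)), <- Rmult_assoc,
        Rinv_r by lra. lra. }
    assert (E2 : exp (- s) <= 1 + - s + 2 * (- s) ^ 2)
      by (apply exp_le_quadratic; rewrite Rabs_Ropp; lra).
    apply Rle_trans with (q * (1 + s * (/ q - 1) + 2 * (s * (/ q - 1)) ^ 2)
                          + (1 - q) * (1 + - s + 2 * (- s) ^ 2)).
    { apply Rplus_le_compat; apply Rmult_le_compat_l; lra. }
    replace (q * (1 + s * (/ q - 1) + 2 * (s * (/ q - 1)) ^ 2) + (1 - q) * (1 + - s + 2 * (- s) ^ 2))
      with (1 + 2 * s ^ 2 / q - 2 * s ^ 2) by (field; lra).
    nra.
Qed.

Lemma sampled_entry_mgf_le q a alpha beta c : 0 < q ->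
  Rabs a <= alpha * q -> a ^ 2 <= beta * q -> Rabs c * alpha <= / 2 ->
  Rmin q 1 * exp (c * ((/ Rmin q 1 - 1) * a)) + (1 - Rmin q 1) * exp (- (c * a))
  <= exp (2 * c ^ 2 * beta).
Proof.
  intros Hq Ha Ha2 Hc. rewrite Rmult_comm with (r1 := / Rmin q 1 - 1), <- Rmult_assoc.
  eapply Rle_trans; [apply bernoulli_mgf_le; auto|].
  - rewrite Rabs_mult. pose proof (Rabs_pos c).
    apply Rle_trans with (Rabs c * (alpha * q)); [now apply Rmult_le_compat_l|nra].
  - apply exp_le_compat. unfold Rdiv.
    replace (2 * (c * a) ^ 2 * / q) with (2 * c ^ 2 * (a ^ 2 * / q)) by ring.
    apply Rmult_le_compat_l; [nra|].
    apply Rmult_le_reg_r with q; auto.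
    rewrite Rmult_assoc, Rinv_l by lra. lra.
Qed.

Definition sample_dev (n : nat) (W A : nat -> nat -> nat -> R) (d : outcome) (i : nat) : R :=
  sumR n (fun j => sumR n (fun k => (b2R (d i j k) * W i j k - 1) * A i j k)).

Definition row_factor (W A : nat -> nat -> nat -> R) (c : R) (i : nat)
  (t : nat * nat * nat) (b : bool) : R :=
  let '(i', j, k) := t in
  if Nat.eqb i' i then exp (c * ((b2R b * W i' j k - 1) * A i' j k)) else 1.

Lemma exp_sample_dev n W A c i d : (i < n)%nat ->
  exp (c * sample_dev n W A d i) =
  prodL (triples n) (fun t => row_factor W A c i t (uncurry3 d t)).
Proof.
  intro Hi.
  rewrite (prodL_ext _ _ (fun '(i', j, k) => if Nat.eqb i' i then
     exp (c * ((b2R (d i j k) * W i j k - 1) * A i j k)) else 1)).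
  - rewrite prodL_triples_row by exact Hi.
    unfold sample_dev. rewrite sumR_mult_l, exp_sumR. apply prodR_ext; intros j _.
    now rewrite sumR_mult_l, exp_sumR.
  - intros [[i' j] k]. unfold row_factor. now destruct (Nat.eqb_spec i' i); [subst|].
Qed.

(* By independence the moment generating function of a coordinate factorises over
   its entries. *)
Lemma expect_exp_sample_dev_le n p W A i c K d0 : bernoulli_params p -> (i < n)%nat ->
  (forall j k, (j < n)%nat -> (k < n)%nat ->
     p i j k * exp (c * ((W i j k - 1) * A i j k)) + (1 - p i j k) * exp (- (c * A i j k))
     <= exp K) ->
  expect (triples n) p d0 (fun d => exp (c * sample_dev n W A d i))
  <= exp (INR n * (INR n * K)).
Proof.
  intros Hp Hi HK.
  set (g j k := p i j k * exp (c * ((W i j k - 1) * A i j k))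
                + (1 - p i j k) * exp (- (c * A i j k))).
  assert (Hg : forall j k, 0 <= g j k).
  { intros j k. destruct (Hp i j k). pose proof (exp_pos (c * ((W i j k - 1) * A i j k))).
    pose proof (exp_pos (- (c * A i j k))). unfold g. nra. }
  rewrite (expect_ext _ _ _ _ _ (fun d => exp_sample_dev n W A c i d Hi)).
  rewrite expect_prodL_indep by apply NoDup_triples.
  rewrite (prodL_ext _ _ (fun '(i', j, k) => if Nat.eqb i' i then g j k else 1)).
  - rewrite prodL_triples_row by exact Hi.
    rewrite <- (sumR_const n K), <- sumR_const, exp_sumR.
    apply prodR_le; intros j Hj. rewrite exp_sumR. split; [apply prodR_nonneg; auto|].
    apply prodR_le; intros k Hk. split; [|apply HK]; auto.
  - intros [[i' j] k]. destruct (Nat.eqb_spec i' i) as [->|Hne];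
      [|unfold row_factor; apply Nat.eqb_neq in Hne; rewrite Hne; ring].
    unfold g, row_factor; cbn [uncurry3 b2R]; rewrite Nat.eqb_refl.
    replace (1 * W i j k - 1) with (W i j k - 1) by ring.
    replace (c * ((0 * W i j k - 1) * A i j k)) with (- (c * A i j k)) by ring.
    reflexivity.
Qed.

Lemma indic_norm_le_ge n (v : nat -> R) lam t B : 0 < lam -> 0 <= B -> INR n * t ^ 2 <= B ^ 2 ->
  1 - sumR n (fun i => exp (- (lam * t)) * (exp (lam * v i) + exp (- lam * v i)))
  <= indic (sqrt (sumR n (fun i => v i ^ 2)) <= B).
Proof.
  intros Hl HB HnB.
  assert (Hnn : forall i, (i < n)%nat ->
    0 <= exp (- (lam * t)) * (exp (lam * v i) + exp (- lam * v i))).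
  { intros. pose proof (exp_pos (- (lam * t))). pose proof (exp_pos (lam * v i)).
    pose proof (exp_pos (- lam * v i)). nra. }
  unfold indic; destruct excluded_middle_informative as [_|Hfar].
  - pose proof (sumR_nonneg _ _ Hnn). lra.
  - destruct (classic (exists i, (i < n)%nat /\ (t <= v i \/ t <= - v i)))
      as [[i [Hi Hv]]|Hno].
    + enough (1 <= exp (- (lam * t)) * (exp (lam * v i) + exp (- lam * v i)))
        by (pose proof (sumR_ge_term _ _ i Hnn Hi); lra).
      rewrite Rmult_plus_distr_l, <- !exp_plus.
      pose proof (exp_pos (- (lam * t) + lam * v i)).
      pose proof (exp_pos (- (lam * t) + - lam * v i)).
      destruct Hv as [Hv|Hv]; [pose proof (exp_ineq1_le (- (lam * t) + lam * v i))
                               |pose proof (exp_ineq1_le (- (lam * t) + - lam * v i))]; nra.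
    + (* every coordinate is below [t] in absolute value, so the norm is at most [sqrt n * t] *)
      exfalso. apply Hfar. rewrite <- (sqrt_pow2 B HB). apply sqrt_le_1_alt.
      apply Rle_trans with (sumR n (fun _ => t ^ 2)); [|now rewrite sumR_const].
      apply sumR_le. intros i Hi.
      assert (v i < t /\ - v i < t) as [] by (split; apply Rnot_le_lt; intro; apply Hno; eauto).
      nra.
Qed.

Lemma prob_norm_le_of_mgf n p (v : outcome -> nat -> R) lam t B M :
  bernoulli_params p -> 0 < lam -> 0 <= B -> INR n * t ^ 2 <= B ^ 2 ->
  (forall c i, (i < n)%nat -> Rabs c = lam ->
     expect (triples n) p (fun _ _ _ => false) (fun d => exp (c * v d i)) <= M) ->
  1 - 2 * INR n * (exp (- (lam * t)) * M)
  <= prob n p (fun d => sqrt (sumR n (fun i => v d i ^ 2)) <= B).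
Proof.
  intros Hp Hlam HB HtB Hmgf.
  apply Rle_trans with (expect (triples n) p (fun _ _ _ => false) (fun d =>
    1 + (-1) * sumR n (fun i => exp (- (lam * t)) * (exp (lam * v d i) + exp (- lam * v d i))))).
  2: { apply expect_le; auto. intro d.
       eapply Rle_trans; [|apply indic_norm_le_ge; eauto]. right; ring. }
  rewrite expect_plus, expect_const, expect_scal, expect_sumR.
  assert (sumR n (fun i => expect (triples n) p (fun _ _ _ => false) (fun d =>
      exp (- (lam * t)) * (exp (lam * v d i) + exp (- lam * v d i))))
    <= INR n * (2 * (exp (- (lam * t)) * M))).
  { rewrite <- sumR_const. apply sumR_le. intros i Hi.
    rewrite expect_scal, expect_plus.
    pose proof (Hmgf lam i Hi (Rabs_pos_eq _ (Rlt_le _ _ Hlam))).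
    pose proof (Hmgf (- lam) i Hi (eq_trans (Rabs_Ropp _) (Rabs_pos_eq _ (Rlt_le _ _ Hlam)))).
    pose proof (exp_pos (- (lam * t))). nra. }
  lra.
Qed.

(* Chernoff's method with the optimal [lam = t / (4 n^2 beta)]. *)
Theorem sample_dev_tail n (q A : nat -> nat -> nat -> R) alpha beta t B :
  (1 <= n)%nat -> (forall i j k, 0 < q i j k) ->
  (forall i j k, (i < n)%nat -> (j < n)%nat -> (k < n)%nat -> Rabs (A i j k) <= alpha * q i j k) ->
  (forall i j k, (i < n)%nat -> (j < n)%nat -> (k < n)%nat -> A i j k ^ 2 <= beta * q i j k) ->
  0 < beta -> 0 < t -> t * alpha <= 2 * INR n ^ 2 * beta -> 0 <= B -> INR n * t ^ 2 <= B ^ 2 ->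
  1 - 2 * INR n * exp (- (t ^ 2 / (8 * INR n ^ 2 * beta))) <=
  prob n (fun i j k => Rmin (q i j k) 1) (fun d =>
    sqrt (sumR n (fun i => sample_dev n (fun i j k => / Rmin (q i j k) 1) A d i ^ 2)) <= B).
Proof.
  intros Hn Hq HA HA2 Hb Ht Hta HB HtB.
  set (N := INR n) in *. assert (HN : 1 <= N) by (apply (le_INR 1); auto).
  set (lam := t / (4 * N ^ 2 * beta)). set (K := 2 * lam ^ 2 * beta).
  assert (HNb : 0 < 4 * N ^ 2 * beta) by (apply Rmult_lt_0_compat; [nra|lra]).
  assert (Hlam : 0 < lam) by (unfold lam; apply Rdiv_lt_0_compat; lra).
  replace (exp (- (t ^ 2 / (8 * N ^ 2 * beta)))) with (exp (- (lam * t)) * exp (N * (N * K)))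
    by (rewrite <- exp_plus; f_equal; unfold K, lam; field; nra).
  assert (Hp : bernoulli_params (fun i j k => Rmin (q i j k) 1))
    by (apply bernoulli_params_Rmin; intros; now apply Rlt_le).
  apply prob_norm_le_of_mgf; auto.
  intros c i Hi Hc. apply expect_exp_sample_dev_le; auto. intros j k Hj Hk.
  replace K with (2 * c ^ 2 * beta) by (unfold K; rewrite <- Hc, pow2_abs; ring).
  apply (sampled_entry_mgf_le _ _ alpha); auto. rewrite Hc. unfold lam.
  apply Rmult_le_reg_r with (4 * N ^ 2 * beta); [lra|].
  replace (t / (4 * N ^ 2 * beta) * alpha * (4 * N ^ 2 * beta)) with (t * alpha)
    by (field; lra). lra.
Qed.

(** * The sampling probabilities *)

Lemma inv_sqrt_INR_bounds n : (1 <= n)%nat -> 0 < / sqrt (INR n) <= 1.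
Proof.
  intro H. assert (1 <= INR n) by (apply (le_INR 1); auto).
  assert (1 <= sqrt (INR n)) by (rewrite <- sqrt_1; now apply sqrt_le_1_alt).
  split; [apply Rinv_0_lt_compat; lra|].
  rewrite <- Rinv_1. apply Rinv_le_contravar; lra.
Qed.

Section SamplingWeights.
Variables (n : nat) (T : nat -> nat -> nat -> R).
Hypotheses (Hn : (1 <= n)%nat) (HT : frob n T <> 0).

Lemma frob_pos : 0 < frob n T.
Proof. pose proof (sqrt_pos (sum3 n (fun i j k => T i j k ^ 2))). unfold frob in *. lra. Qed.

Lemma slice_norm_le_frob i : (i < n)%nat -> slice_norm n T i <= frob n T.
Proof.
  intro Hi. apply sqrt_le_1_alt.
  apply (sumR_ge_term n (fun i => sumR n (fun j => sumR n (fun k => T i j k ^ 2)))); auto.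
  intros; do 2 (apply sumR_nonneg; intros); apply pow2_ge_0.
Qed.

Lemma nu_ge_inv_sqrt i : / sqrt (INR n) <= nu n T i.
Proof.
  unfold nu. pose proof frob_pos.
  assert (0 <= slice_norm n T i / frob n T) by (apply Rle_mult_inv_pos; [apply sqrt_pos|lra]).
  lra.
Qed.

Lemma nu_pos i : 0 < nu n T i.
Proof. pose proof (nu_ge_inv_sqrt i). pose proof (inv_sqrt_INR_bounds n Hn). lra. Qed.

Lemma nu_le_2 i : (i < n)%nat -> nu n T i <= 2.
Proof.
  intro Hi. unfold nu. pose proof (inv_sqrt_INR_bounds n Hn). pose proof frob_pos.
  assert (slice_norm n T i / frob n T <= 1)
    by (apply Rmult_le_reg_r with (frob n T); [lra|];
        unfold Rdiv; rewrite Rmult_assoc, Rinv_l, Rmult_1_r, Rmult_1_l by lra;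
        now apply slice_norm_le_frob).
  lra.
Qed.

Lemma Zc_pos : 0 < Zc n T.
Proof.
  unfold Zc. destruct n as [|n']; [lia|]. cbn [sumR].
  pose proof (exp_pos (3 / 2 * ln (nu (S n') T n'))).
  assert (0 <= sumR n' (fun i => Rpower (nu (S n') T i) (3 / 2)))
    by (apply sumR_nonneg; intros; left; apply exp_pos).
  unfold Rpower in *. nra.
Qed.

Lemma pr_lower_bound i j k :
  Rpower (nu n T j) (3 / 2) * Rpower (nu n T k) (3 / 2) <= 6 * INR n * Zc n T * pr n T i j k.
Proof.
  unfold pr. replace 0.5 with (/ 2) by lra.
  set (a := Rpower (nu n T i) (3/2)). set (b := Rpower (nu n T j) (3/2)).
  set (c := Rpower (nu n T k) (3/2)).
  assert (0 < a /\ 0 < b /\ 0 < c) as (? & ? & ?) by (repeat split; apply exp_pos).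
  pose proof Zc_pos. assert (1 <= INR n) by (apply (le_INR 1); auto).
  assert (0 <= T i j k ^ 2 / frob n T ^ 2)
    by (apply Rle_mult_inv_pos; [apply pow2_ge_0 | apply pow_lt, frob_pos]).
  assert (HD : 0 < 3 * INR n * Zc n T) by nra.
  replace (6 * INR n * Zc n T * (/ 2 * ((a * b + b * c + c * a) / (3 * INR n * Zc n T))
           + / 2 * (T i j k ^ 2 / frob n T ^ 2)))
    with (a * b + b * c + c * a + 3 * INR n * Zc n T * (T i j k ^ 2 / frob n T ^ 2))
    by (field; lra).
  assert (0 <= 3 * INR n * Zc n T * (T i j k ^ 2 / frob n T ^ 2)) by nra.
  nra.
Qed.

Lemma pr_pos i j k : 0 < pr n T i j k.
Proof.
  pose proof (pr_lower_bound i j k). pose proof Zc_pos.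
  assert (1 <= INR n) by (apply (le_INR 1); auto).
  assert (0 < Rpower (nu n T j) (3/2) * Rpower (nu n T k) (3/2))
    by (apply Rmult_lt_0_compat; apply exp_pos).
  destruct (Rle_lt_dec (pr n T i j k) 0); [|auto].
  assert (0 <= 6 * INR n * Zc n T) by nra.
  assert (6 * INR n * Zc n T * pr n T i j k <= 0) by nra. lra.
Qed.

End SamplingWeights.

Section EntryBounds.
Variables (N e Z p x y a b c : R).
Hypotheses (HN : 1 <= N) (He : 0 <= e) (Hx : / sqrt N <= x) (Hy : / sqrt N <= y)
  (Ha : Rabs a <= e / (N * sqrt N)) (Hb : Rabs b <= 2 * x) (Hc : Rabs c <= 2 * y)
  (Hp : x * sqrt x * (y * sqrt y) <= 6 * N * Z * p).

Let sN_pos : 0 < sqrt N. Proof. apply sqrt_lt_R0; lra. Qed.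
Let sN_sq : sqrt N * sqrt N = N. Proof. apply sqrt_sqrt; lra. Qed.
Let x_pos : 0 < x. Proof. pose proof (Rinv_0_lt_compat _ sN_pos). lra. Qed.
Let y_pos : 0 < y. Proof. pose proof (Rinv_0_lt_compat _ sN_pos). lra. Qed.
Let sx_sq : sqrt x * sqrt x = x. Proof. apply sqrt_sqrt; lra. Qed.
Let sy_sq : sqrt y * sqrt y = y. Proof. apply sqrt_sqrt; lra. Qed.
Let sx_pos : 0 < sqrt x. Proof. now apply sqrt_lt_R0. Qed.
Let sy_pos : 0 < sqrt y. Proof. now apply sqrt_lt_R0. Qed.

Let entry_le : Rabs (a * b * c) <= 4 * e * (x * y) / (N * sqrt N).
Proof.
  eapply Rle_trans; [exact (Rabs_mult3_le _ _ _ _ _ _ Ha Hb Hc)|].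
  right. field. split; lra.
Qed.

Lemma sampled_entry_abs_le : Rabs (a * b * c) <= 24 * e * Z * p.
Proof.
  assert (Hxy : 1 <= sqrt x * sqrt y * sqrt N).
  { assert (1 <= x * y * N).
    { replace 1 with (/ sqrt N * / sqrt N * (sqrt N * sqrt N)) by (field; lra).
      rewrite sN_sq.
      apply Rmult_le_compat_r; [lra|].
      pose proof (Rinv_0_lt_compat _ sN_pos). apply Rmult_le_compat; lra. }
    assert (0 < sqrt x * sqrt y * sqrt N) by (repeat apply Rmult_lt_0_compat; auto).
    nra. }
  eapply Rle_trans; [exact entry_le|].
  replace (24 * e * Z * p) with (4 * e / N * (6 * N * Z * p)) by (field; lra).
  replace (4 * e * (x * y) / (N * sqrt N)) with (4 * e / N * (x * y / sqrt N))
    by (field; lra).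
  apply Rmult_le_compat_l; [apply Rle_mult_inv_pos; lra|].
  eapply Rle_trans; [|exact Hp].
  apply Rmult_le_reg_r with (sqrt N); auto.
  replace (x * y / sqrt N * sqrt N) with (x * y * 1) by (field; lra).
  replace (x * sqrt x * (y * sqrt y) * sqrt N) with (x * y * (sqrt x * sqrt y * sqrt N)) by ring.
  apply Rmult_le_compat_l; nra.
Qed.

Lemma sampled_entry_sq_le : x <= 2 -> y <= 2 -> (a * b * c) ^ 2 <= 192 * e ^ 2 * Z * p / N ^ 2.
Proof.
  intros Hx2 Hy2.
  assert (Hs : sqrt x * sqrt y <= 2) by nra.
  assert (Hsq : (a * b * c) ^ 2 <= 16 * e ^ 2 / N ^ 3 * (x * y * (x * y))).
  { assert (HN3 : N ^ 3 = (N * sqrt N) ^ 2)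
      by (replace ((N * sqrt N) ^ 2) with (N * N * (sqrt N * sqrt N)) by ring;
          rewrite sN_sq; ring).
    rewrite <- pow2_abs, HN3.
    replace (16 * e ^ 2 / (N * sqrt N) ^ 2 * (x * y * (x * y)))
      with ((4 * e * (x * y) / (N * sqrt N)) ^ 2) by (field; split; lra).
    apply pow_incr. split; [apply Rabs_pos | exact entry_le]. }
  eapply Rle_trans; [exact Hsq|].
  replace (192 * e ^ 2 * Z * p / N ^ 2) with (16 * e ^ 2 / N ^ 3 * (2 * (6 * N * Z * p)))
    by (field; lra).
  apply Rmult_le_compat_l; [apply Rle_mult_inv_pos; [nra | apply pow_lt; lra]|].
  replace (x * y * (x * y)) with (x * sqrt x * (y * sqrt y) * (sqrt x * sqrt y))
    by (replace (x * sqrt x * (y * sqrt y) * (sqrt x * sqrt y))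
          with (x * y * (sqrt x * sqrt x) * (sqrt y * sqrt y)) by ring;
        rewrite sx_sq, sy_sq; ring).
  assert (0 <= x * sqrt x * (y * sqrt y)) by (apply Rmult_le_pos; nra).
  nra.
Qed.

End EntryBounds.

(** * The noise deviation *)

Section NoiseDeviation.
Variables (n : nat) (T E : nat -> nat -> nat -> R) (U : nat -> nat -> R) (q : nat).
Hypotheses (Hn : (1 <= n)%nat) (HT : frob n T <> 0)
  (HE : forall i j k, (i < n)%nat -> (j < n)%nat -> (k < n)%nat ->
          Rabs (E i j k) <= frob n E / Rpower (INR n) (3 / 2))
  (HU : forall i, (i < n)%nat -> Rabs (U i q) <= 2 * nu n T i).

Lemma noise_entry_bounds i j k : (i < n)%nat -> (j < n)%nat -> (k < n)%nat ->
  Rabs (E i j k * U j q * U k q) <= 24 * frob n E * Zc n T * pr n T i j k /\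
  (E i j k * U j q * U k q) ^ 2 <= 192 * frob n E ^ 2 * Zc n T * pr n T i j k / INR n ^ 2.
Proof.
  intros Hi Hj Hk.
  assert (HN : 1 <= INR n) by (apply (le_INR 1); auto).
  assert (Ha : Rabs (E i j k) <= frob n E / (INR n * sqrt (INR n)))
    by (rewrite <- Rpower_3_2 by lra; auto).
  assert (Hp := pr_lower_bound n T Hn HT i j k).
  rewrite !Rpower_3_2 in Hp by (apply nu_pos; auto).
  pose proof (nu_ge_inv_sqrt n T HT j). pose proof (nu_ge_inv_sqrt n T HT k).
  split.
  - apply (sampled_entry_abs_le (INR n) _ _ _ (nu n T j) (nu n T k)); auto. apply sqrt_pos.
  - apply (sampled_entry_sq_le (INR n) _ _ _ (nu n T j) (nu n T k)); auto; now apply nu_le_2.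
Qed.

Lemma dev_norm_sample_dev m d : dev_norm n m T E U q d =
  sqrt (sumR n (fun i => sample_dev n (Wt n m T) (fun i j k => E i j k * U j q * U k q) d i ^ 2)).
Proof.
  unfold dev_norm, sample_dev. f_equal. apply sumR_ext; intros i _. f_equal.
  apply sumR_ext; intros j _. apply sumR_ext; intros k _. ring.
Qed.

Theorem noise_dev_tail m t B : 0 < m -> 0 < frob n E -> 0 < t <= 16 * frob n E -> 0 <= B ->
  INR n * t ^ 2 <= B ^ 2 ->
  1 - 2 * INR n * exp (- (t ^ 2 * m / (1536 * frob n E ^ 2 * Zc n T))) <=
  prob n (phat n m T) (fun d => dev_norm n m T E U q d <= B).
Proof.
  intros Hm He [Ht Hte] HB HtB.
  set (e := frob n E) in *. set (N := INR n) in *. set (Z := Zc n T).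
  assert (HN : 1 <= N) by (apply (le_INR 1); auto).
  assert (HZ : 0 < Z) by (now apply Zc_pos).
  rewrite (prob_ext n _ _ (fun d => sqrt (sumR n (fun i =>
    sample_dev n (Wt n m T) (fun i j k => E i j k * U j q * U k q) d i ^ 2)) <= B))
    by (intro d; now rewrite dev_norm_sample_dev).
  replace (t ^ 2 * m / (1536 * e ^ 2 * Z))
    with (t ^ 2 / (8 * N ^ 2 * (192 * e ^ 2 * Z / (m * N ^ 2)))) by (field; repeat split; lra).
  apply (sample_dev_tail n (fun i j k => m * pr n T i j k) _ (24 * e * Z / m)
           (192 * e ^ 2 * Z / (m * N ^ 2))); auto.
  - intros; apply Rmult_lt_0_compat; [lra | now apply pr_pos].
  - intros i j k Hi Hj Hk. replace (24 * e * Z / m * (m * pr n T i j k))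
      with (24 * e * Z * pr n T i j k) by (field; lra).
    now apply noise_entry_bounds.
  - intros i j k Hi Hj Hk. replace (192 * e ^ 2 * Z / (m * N ^ 2) * (m * pr n T i j k))
      with (192 * e ^ 2 * Z * pr n T i j k / N ^ 2) by (field; lra).
    now apply noise_entry_bounds.
  - apply Rdiv_lt_0_compat; [|apply Rmult_lt_0_compat]; try apply Rmult_lt_0_compat; nra.
  - fold N. replace (2 * N ^ 2 * (192 * e ^ 2 * Z / (m * N ^ 2))) with (16 * e * (24 * e * Z / m))
      by (field; lra).
    apply Rmult_le_compat_r; [apply Rle_mult_inv_pos; nra | lra].
Qed.

Lemma dev_norm_noise_free m d :
  (forall i j k, (i < n)%nat -> (j < n)%nat -> (k < n)%nat -> E i j k = 0) ->
  dev_norm n m T E U q d = 0.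
Proof.
  intro H0. rewrite dev_norm_sample_dev, <- sqrt_0. f_equal.
  rewrite (sumR_ext _ _ (fun _ => 0)), sumR_const; [ring|].
  intros i Hi. unfold sample_dev.
  rewrite (sumR_ext _ _ (fun _ => 0)), sumR_const; [ring|].
  intros j Hj. rewrite (sumR_ext _ _ (fun _ => 0)), sumR_const; [ring|].
  intros k Hk. rewrite H0; auto; ring.
Qed.

Lemma noise_vanishes_of_frob_0 : frob n E = 0 ->
  forall i j k, (i < n)%nat -> (j < n)%nat -> (k < n)%nat -> E i j k = 0.
Proof.
  intros He0 i j k Hi Hj Hk. pose proof (HE i j k Hi Hj Hk) as Hijk.
  rewrite He0, Rdiv_0_l in Hijk.
  destruct (Req_dec (E i j k) 0) as [|Hnz]; [assumption|].
  pose proof (Rabs_pos_lt _ Hnz). lra.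
Qed.

Corollary noise_dev_tail_rel eps m : 0 < eps <= 1 -> 0 < m -> 0 < frob n E ->
  1 - 2 * INR n * exp (- (eps ^ 2 * m / (1536 * INR n * Zc n T))) <=
  prob n (phat n m T) (fun d => dev_norm n m T E U q d <= eps * frob n E).
Proof.
  intros Heps Hm He. set (N := INR n) in *. set (e := frob n E) in *.
  assert (HN : 1 <= N) by (apply (le_INR 1); auto).
  assert (HZ : 0 < Zc n T) by (now apply Zc_pos).
  assert (HsN : sqrt N * sqrt N = N) by (apply sqrt_sqrt; lra).
  assert (HsN1 : 1 <= sqrt N) by (rewrite <- sqrt_1; apply sqrt_le_1_alt; lra).
  set (t := eps * e / sqrt N).
  assert (Ht2 : t ^ 2 = eps ^ 2 * e ^ 2 / N) by (unfold t; rewrite <- HsN at 2; field; lra).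
  replace (eps ^ 2 * m / (1536 * N * Zc n T)) with (t ^ 2 * m / (1536 * e ^ 2 * Zc n T))
    by (rewrite Ht2; field; repeat split; lra).
  apply noise_dev_tail; auto; [| nra | fold N; rewrite Ht2; right; field; lra].
  unfold t. split; [apply Rdiv_lt_0_compat; nra|].
  apply Rmult_le_reg_r with (sqrt N); [lra|].
  unfold Rdiv. rewrite Rmult_assoc, Rinv_l by lra. fold e. nra.
Qed.

End NoiseDeviation.

Lemma two_mul_exp_neg_le N Q : 2 <= N -> 32 * ln N ^ 2 <= Q -> 2 * N * exp (- Q) <= / N ^ 10.
Proof.
  intros HN HQ. set (L := ln N) in *.
  assert (HL : ln 2 <= L) by now apply ln_2_le.
  pose proof ln_lt_2.
  assert (Hexp : exp (ln 2 + 11 * L) = 2 * N ^ 11).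
  { rewrite exp_plus, exp_ln by lra. unfold L.
    replace (11 * ln N) with (ln (N ^ 11)) by (rewrite ln_pow by lra; simpl; ring).
    rewrite exp_ln; [reflexivity | apply pow_lt; lra]. }
  assert (exp (- Q) <= / (2 * N ^ 11)).
  { rewrite <- Hexp, <- exp_Ropp. apply exp_le_compat. nra. }
  assert (0 < N ^ 10) by (apply pow_lt; lra).
  apply Rle_trans with (2 * N * / (2 * N ^ 11)); [apply Rmult_le_compat_l; lra|].
  right. simpl. field. lra.
Qed.

Theorem mainTheorem10 :
  exists C : R, 0 < C /\
  forall (n r : nat) (sigma : nat -> R) (Us : nat -> nat -> R)
         (E : nat -> nat -> nat -> R) (U : nat -> nat -> R)
         (q : nat) (eps m : R),
    (2 <= n)%nat ->
    (forall l l', (l < r)%nat -> (l' < r)%nat ->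
        sumR n (fun i => Us i l * Us i l') = if Nat.eqb l l' then 1 else 0) ->
    (forall l, (l < r)%nat -> 0 < sigma l) ->
    frob n (cp_tensor r sigma Us E) <> 0 ->
    (forall i j k, (i < n)%nat -> (j < n)%nat -> (k < n)%nat ->
        Rabs (E i j k) <= frob n E / Rpower (INR n) (3/2)) ->
    (forall l, (l < r)%nat -> sumR n (fun i => U i l ^ 2) = 1) ->
    (forall i l, (i < n)%nat -> (l < r)%nat ->
        Rabs (U i l) <= 2 * nu n (cp_tensor r sigma Us E) i) ->
    (q < r)%nat ->
    0 < eps <= 1 ->
    m >= C / eps ^ 2 * INR n * Zc n (cp_tensor r sigma Us E) * (ln (INR n)) ^ 2 ->
    prob n (phat n m (cp_tensor r sigma Us E))
      (fun d => dev_norm n m (cp_tensor r sigma Us E) E U q d <= eps * frob n E)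
    >= 1 - / (INR n ^ 10).
Proof.
  exists 50000. split; [lra|].
  intros n r sigma Us E U q eps m Hn _ _ HT HE _ HU Hq Heps Hm.
  set (T := cp_tensor r sigma Us E) in *. set (N := INR n) in *.
  set (e := frob n E) in *. set (Z := Zc n T) in *.
  assert (Hn1 : (1 <= n)%nat) by lia.
  assert (HN : 2 <= N) by (apply (le_INR 2); auto).
  assert (HZ : 0 < Z) by (now apply Zc_pos).
  assert (HL : 0 < ln N ^ 2) by (apply pow_lt; pose proof ln_lt_2; pose proof (ln_2_le N HN); lra).
  assert (HmL : 50000 * N * Z * ln N ^ 2 <= eps ^ 2 * m).
  { apply Rge_le in Hm. replace (50000 * N * Z * ln N ^ 2)
      with (eps ^ 2 * (50000 / eps ^ 2 * N * Z * ln N ^ 2)) by (field; lra).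
    apply Rmult_le_compat_l; [nra | exact Hm]. }
  apply Rle_ge. destruct (Req_dec e 0) as [He0|He0].
  - assert (0 < / N ^ 10) by (apply Rinv_0_lt_compat, pow_lt; lra).
    rewrite prob_certain; [lra|]. intro d.
    rewrite dev_norm_noise_free, He0; [lra|].
    now apply (noise_vanishes_of_frob_0 n E HE).
  - assert (He : 0 < e) by (assert (0 <= e) by apply sqrt_pos; lra).
    assert (Hm0 : 0 < m) by (assert (0 < N * Z) by nra; nra).
    eapply Rle_trans; [|apply (noise_dev_tail_rel n T E U q Hn1 HT HE); auto].
    apply Rplus_le_compat_l, Ropp_le_contravar, two_mul_exp_neg_le; auto.
    fold N Z. apply Rmult_le_reg_r with (1536 * N * Z); [nra|].
    replace (eps ^ 2 * m / (1536 * N * Z) * (1536 * N * Z)) with (eps ^ 2 * m) by (field; lra).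
    nra.
Qed.
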